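(* Let $b>0$ and $\beta>0$. Let $\alpha(\theta)=\frac{1-\cos\theta}{\theta-\sin\theta}$ for $\theta\in(0,2\pi)$, let $\tilde\theta\in(0,2\pi)$ be the unique number with $\alpha(\tilde\theta)=\beta/b$, and let $k=\frac{2\beta}{1-\cos\tilde\theta}$. Let $\gamma_0:[0,b]\to\mathbb{R}$ be the function whose graph is the curve $\theta\mapsto\left(\frac{k}{2}(\theta-\sin\theta),\ \frac{k}{2}(1-\cos\theta)\right)$, $\theta\in[0,\tilde\theta]$, and let $\delta_0=(2\gamma_0)^{1/2}$. Let $Y$ be the set of all $\delta\in C([0,b])$ which are continuously differentiable on $(0,b]$, with $\delta(t)>0$ for $t\in(0,b]$, $\delta(0)=0$, $\delta(b)=(2\beta)^{1/2}$, and such that the improper integral $$\mathcal{M}(\delta)=\int_0^b\left(\delta(t)^{-2}+\delta'(t)^2\right)^{1/2}dt$$ is defined (finite). Then $\delta_0$ is the unique minimum of $\mathcal{M}$ on $Y$.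
   Context: The function $\alpha$ is a strictly decreasing bijection from $(0,2\pi)$ onto $(0,\infty)$, so $\tilde\theta$ is well defined; with this choice of $k$, the curve starts at $(0,0)$ and ends at $(b,\beta)$, and $\theta\mapsto\frac{k}{2}(\theta-\sin\theta)$ is strictly increasing, so the curve is the graph of a function on $[0,b]$. *)

From Stdlib Require Import Reals.
From Coquelicot Require Import Coquelicot.
Open Scope R_scope.

Definition alpha (th : R) : R := (1 - cos th) / (th - sin th).

Definition M_integrand (delta : R -> R) (t : R) : R :=
  sqrt (/ (delta t ^ 2) + (Derive delta t) ^ 2).

Definition M_defined (b : R) (delta : R -> R) : Prop :=
  ex_RInt_gen (M_integrand delta) (at_right 0) (at_point b).

Definition M (b : R) (delta : R -> R) : R :=
  RInt_gen (M_integrand delta) (at_right 0) (at_point b).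

Definition cont_on_0b (b : R) (delta : R -> R) : Prop :=
  forall t, 0 <= t <= b ->
    filterlim delta (within (fun x => 0 <= x <= b) (locally t)) (locally (delta t)).

Definition C1_on_0b_right (b : R) (delta : R -> R) : Prop :=
  exists d : R -> R,
    (forall t, 0 < t < b -> is_derive delta t (d t)) /\
    filterlim (fun h => (delta (b + h) - delta b) / h) (at_left 0) (locally (d b)) /\
    (forall t, 0 < t <= b ->
       filterlim d (within (fun x => 0 < x <= b) (locally t)) (locally (d t))).

Definition inY (b beta : R) (delta : R -> R) : Prop :=
  cont_on_0b b delta /\
  C1_on_0b_right b delta /\
  (forall t, 0 < t <= b -> 0 < delta t) /\
  delta 0 = 0 /\
  delta b = sqrt (2 * beta) /\
  M_defined b delta.

From Stdlib Require Import Reals Lra Psatz ClassicalEpsilon Ranalysis5.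
From Coquelicot Require Import Coquelicot.
Open Scope R_scope.

(* Parametrize [0, b] by the cycloid angle θ(t), defined by t = k/2 (θ - sin θ), and put
   s = sin (θ/2), c = cos (θ/2), m = sqrt (2 k), so that δ0 = m s.  Since c' = -1/(m² s),
   for every positive δ with derivative p the Cauchy-Schwarz inequality against the unit
   vector (s, c) gives
     (δ^-2 + p^2)^(1/2) >= s/δ + c p = (2t/m + c δ)' + (m s - δ)^2 / (δ m² s).
   Integrating over (0, b) with δ(0) = 0 and δ(b) = δ0(b) yields M(δ) >= 2b/m + c(b) δ0(b)
   = m θ̃/2, and this is M(δ0), whose integrand is m θ'/2.  If δ(t) <> δ0(t) at an interior
   point, the last term stays positive near t, and the inequality is strict. *)

Lemma filterlim_Rplus {T} (F : (T -> Prop) -> Prop) {FF : Filter F} (f g : T -> R) a c :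
  filterlim f F (locally a) -> filterlim g F (locally c) ->
  filterlim (fun x => f x + g x) F (locally (a + c)).
Proof.
  intros Hf Hg. apply (filterlim_comp_2 f g Rplus Hf Hg).
  apply (filterlim_plus (V:=R_NormedModule) a c).
Qed.

Lemma filterlim_Rmult {T} (F : (T -> Prop) -> Prop) {FF : Filter F} (f g : T -> R) a c :
  filterlim f F (locally a) -> filterlim g F (locally c) ->
  filterlim (fun x => f x * g x) F (locally (a * c)).
Proof.
  intros Hf Hg. apply (filterlim_comp_2 f g Rmult Hf Hg).
  apply (filterlim_mult (K:=R_AbsRing) a c).
Qed.

Lemma continuous_Rplus (f g : R -> R) x :
  continuous f x -> continuous g x -> continuous (fun y => f y + g y) x.
Proof. apply filterlim_Rplus, locally_filter. Qed.

Lemma continuous_Rmult (f g : R -> R) x :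
  continuous f x -> continuous g x -> continuous (fun y => f y * g y) x.
Proof. apply filterlim_Rmult, locally_filter. Qed.

Lemma ball_R (x : R) (e : posreal) y : ball x e y -> x - e < y < x + e.
Proof. intros H. change (Rabs (y - x) < e) in H. apply Rabs_def2 in H. lra. Qed.

Lemma at_right_lt a c : a < c -> at_right a (fun x => a < x < c).
Proof.
  intros H. exists (mkposreal (c - a) ltac:(lra)).
  intros y Hy Hay. apply ball_R in Hy. cbn [pos] in Hy. lra.
Qed.

Lemma at_left_gt a c : a < c -> at_left c (fun x => a < x < c).
Proof.
  intros H. exists (mkposreal (c - a) ltac:(lra)).
  intros y Hy Hyc. apply ball_R in Hy. cbn [pos] in Hy. lra.
Qed.

Lemma locally_between a c t : a < t < c -> locally t (fun x => a < x < c).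
Proof.
  intros H. assert (hp : 0 < Rmin (t - a) (c - t)) by (apply Rmin_glb_lt; lra).
  exists (mkposreal _ hp). intros y Hy. apply ball_R in Hy. cbn [pos] in Hy.
  pose proof (Rmin_l (t - a) (c - t)). pose proof (Rmin_r (t - a) (c - t)). lra.
Qed.

Lemma filterlim_le_R {T} (F : (T -> Prop) -> Prop) {FF : ProperFilter F} (f g : T -> R) lf lg :
  F (fun x => f x <= g x) -> filterlim f F (locally lf) -> filterlim g F (locally lg) ->
  lf <= lg.
Proof. exact (filterlim_le f g lf lg). Qed.

Lemma continuous_of_within (D : R -> Prop) (f : R -> R) t :
  locally t D -> filterlim f (within D (locally t)) (locally (f t)) -> continuous f t.
Proof.
  intros HD Hf P HP. unfold filtermap. generalize (filter_and _ _ HD (Hf P HP)).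
  apply filter_imp. intros x [Hx HPx]. exact (HPx Hx).
Qed.

Lemma filter_le_at_right_within a c : a < c ->
  filter_le (at_right a) (within (fun x => a <= x <= c) (locally a)).
Proof.
  intros H P HP. pose proof (at_right_lt a c H) as Hr. unfold at_right, within in *.
  generalize (filter_and _ _ Hr HP).
  apply filter_imp. intros x [Hx HPx] Hax. specialize (Hx Hax). apply HPx. lra.
Qed.

Lemma filter_le_at_left_within a c : a < c ->
  filter_le (at_left c) (within (fun x => a <= x <= c) (locally c)).
Proof.
  intros H P HP. pose proof (at_left_gt a c H) as Hl. unfold at_left, within in *.
  generalize (filter_and _ _ Hl HP).
  apply filter_imp. intros x [Hx HPx] Hxc. specialize (Hx Hxc). apply HPx. lra.
Qed.

Lemma is_derive_at_left_quotient (f : R -> R) x l :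
  is_derive f x l -> filterlim (fun h => (f (x + h) - f x) / h) (at_left 0) (locally l).
Proof.
  intros D. apply is_derive_Reals in D. apply filterlim_locally. intros eps.
  destruct (D eps (cond_pos eps)) as [del Hd]. exists del. intros h Hh Hneg.
  apply Hd; [lra |]. change (Rabs (h - 0) < del) in Hh. now rewrite Rminus_0_r in Hh.
Qed.

(** * Integrals bounded below by an antiderivative *)

Lemma RInt_Chasles_R (f : R -> R) a b c :
  ex_RInt f a b -> ex_RInt f b c -> RInt f a b + RInt f b c = RInt f a c.
Proof. intros Hab Hbc. exact (RInt_Chasles f a b c Hab Hbc). Qed.

Lemma RInt_ge_antiderivative (f g F : R -> R) x y c :
  x <= y -> ex_RInt f x y ->
  (forall t, x <= t <= y -> is_derive F t (g t) /\ continuous g t) ->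
  (forall t, x < t < y -> g t + c <= f t) ->
  F y - F x + c * (y - x) <= RInt f x y.
Proof.
  intros Hxy Hf HF Hgf.
  apply (is_RInt_le (fun t => g t + c) f x y); auto.
  - replace (F y - F x + c * (y - x)) with ((F y + c * y) - (F x + c * x)) by ring.
    apply (is_RInt_derive (fun t => F t + c * t)); rewrite Rmin_left, Rmax_right; auto.
    + intros t Ht. apply (is_derive_plus F (fun t => c * t)); [apply HF; auto |].
      auto_derive; auto; ring.
    + intros t Ht. apply continuous_Rplus; [apply HF; auto | apply continuous_const].
  - apply (RInt_correct (V:=R_CompleteNormedModule)); auto.
Qed.

Lemma RInt_ge_antiderivative_bump (f g F : R -> R) x a1 a2 y c :
  x <= a1 -> a1 <= a2 -> a2 <= y -> ex_RInt f x y ->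
  (forall t, x <= t <= y -> is_derive F t (g t) /\ continuous g t) ->
  (forall t, x < t < y -> g t <= f t) ->
  (forall t, a1 < t < a2 -> g t + c <= f t) ->
  F y - F x + c * (a2 - a1) <= RInt f x y.
Proof.
  intros H1 H2 H3 Hf HF Hgf Hbump.
  assert (Hxa1 : ex_RInt f x a1) by (apply (ex_RInt_Chasles_1 f x a1 y); auto; lra).
  assert (Ha1y : ex_RInt f a1 y) by (apply (ex_RInt_Chasles_2 f x a1 y); auto; lra).
  assert (Ha12 : ex_RInt f a1 a2) by (apply (ex_RInt_Chasles_1 f a1 a2 y); auto; lra).
  assert (Ha2y : ex_RInt f a2 y) by (apply (ex_RInt_Chasles_2 f a1 a2 y); auto; lra).
  rewrite <- (RInt_Chasles_R f x a1 y), <- (RInt_Chasles_R f a1 a2 y) by auto.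
  assert (I1 := RInt_ge_antiderivative f g F x a1 0 H1 Hxa1).
  assert (I2 := RInt_ge_antiderivative f g F a1 a2 c H2 Ha12).
  assert (I3 := RInt_ge_antiderivative f g F a2 y 0 H3 Ha2y).
  assert (F a1 - F x + 0 * (a1 - x) <= RInt f x a1).
  { apply I1; intros t Ht; [apply HF | rewrite Rplus_0_r; apply Hgf]; lra. }
  assert (F a2 - F a1 + c * (a2 - a1) <= RInt f a1 a2).
  { apply I2; intros t Ht; [apply HF; lra | auto]. }
  assert (F y - F a2 + 0 * (y - a2) <= RInt f a2 y).
  { apply I3; intros t Ht; [apply HF | rewrite Rplus_0_r; apply Hgf]; lra. }
  lra.
Qed.

Lemma is_RInt_gen_at_point_lim (Fa : (R -> Prop) -> Prop) {FF : Filter Fa} (f : R -> R) b l :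
  is_RInt_gen f Fa (at_point b) l ->
  Fa (fun x => ex_RInt f x b) /\ filterlim (fun x => RInt f x b) Fa (locally l).
Proof.
  intros H. split.
  - destruct (H (fun _ => True) filter_true) as [Q Rb HQ HR HQR].
    generalize HQ. apply filter_imp. intros x Hx.
    destruct (HQR x b Hx HR) as [y [Hy _]]. now exists y.
  - intros P HP. destruct (H P HP) as [Q Rb HQ HR HQR]. unfold filtermap.
    generalize HQ. apply filter_imp. intros x Hx.
    destruct (HQR x b Hx HR) as [y [Hy HPy]].
    now rewrite (is_RInt_unique f x b y Hy).
Qed.

Section AntiderivativeBound.

Variables (f g F : R -> R) (a a1 a2 b c : R).
Hypotheses (Ha1 : a < a1) (Ha12 : a1 <= a2) (Hb : a2 < b).
Hypothesis f_nonneg : forall t, a < t < b -> 0 <= f t.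
Hypothesis F_derive : forall t, a < t < b -> is_derive F t (g t) /\ continuous g t /\ g t <= f t.
Hypothesis f_bump : forall t, a1 < t < a2 -> g t + c <= f t.

Lemma RInt_ge_antiderivative_left_lim x Fb : a < x <= a1 -> ex_RInt f x b ->
  filterlim F (at_left b) (locally Fb) -> Fb - F x + c * (a2 - a1) <= RInt f x b.
Proof.
  intros Hx Hxb HFb.
  apply (filterlim_le_R (at_left b) (fun y => F y - F x + c * (a2 - a1)) (fun _ => RInt f x b)).
  - generalize (at_left_gt a2 b Hb). apply filter_imp. intros y Hy.
    assert (Hxy : ex_RInt f x y) by (apply (ex_RInt_Chasles_1 f x y b); auto; lra).
    assert (Hyb : ex_RInt f y b) by (apply (ex_RInt_Chasles_2 f x y b); auto; lra).
    rewrite <- (RInt_Chasles_R f x y b) by auto.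
    assert (0 <= RInt f y b) by (apply RInt_ge_0; auto; try lra; intros; apply f_nonneg; lra).
    assert (F y - F x + c * (a2 - a1) <= RInt f x y).
    { apply (RInt_ge_antiderivative_bump f g F); auto; try lra.
      - intros t Ht. destruct (F_derive t ltac:(lra)) as [? [? ?]]. auto.
      - intros t Ht. apply F_derive. lra. }
    lra.
  - apply (filterlim_Rplus _ (fun y => F y - F x)); [| apply filterlim_const].
    apply (filterlim_Rplus _ F); [exact HFb | apply filterlim_const].
  - apply filterlim_const.
Qed.

Lemma is_RInt_gen_ge_antiderivative l Fa Fb :
  is_RInt_gen f (at_right a) (at_point b) l ->
  filterlim F (at_right a) (locally Fa) -> filterlim F (at_left b) (locally Fb) ->
  Fb - Fa + c * (a2 - a1) <= l.
Proof.
  intros Hl HFa HFb.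
  destruct (is_RInt_gen_at_point_lim (at_right a) f b l Hl) as [Hex Hlim].
  replace (Fb - Fa + c * (a2 - a1)) with (Fb + c * (a2 - a1) + - Fa) by ring.
  apply (filterlim_le_R (at_right a) (fun x => Fb + c * (a2 - a1) + - F x)
           (fun x => RInt f x b) (Fb + c * (a2 - a1) + - Fa) l); [| | exact Hlim].
  - generalize (filter_and _ _ Hex (at_right_lt a a1 Ha1)).
    apply filter_imp. intros x [Hx Hax].
    replace (Fb + c * (a2 - a1) + - F x) with (Fb - F x + c * (a2 - a1)) by ring.
    apply RInt_ge_antiderivative_left_lim; auto. lra.
  - apply (filterlim_Rplus _ (fun _ => Fb + c * (a2 - a1))); [apply filterlim_const |].
    apply (filterlim_comp _ _ _ F Ropp _ (locally Fa)); [exact HFa |].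
    apply (filterlim_opp (V:=R_NormedModule)).
Qed.

End AntiderivativeBound.

Lemma is_RInt_gen_at_right_of_lim (f H : R -> R) a b l :
  a < b -> (forall x, a < x < b -> is_RInt f x b (H x)) ->
  filterlim H (at_right a) (locally l) ->
  is_RInt_gen f (at_right a) (at_point b) l.
Proof.
  intros hab Hi Hl P HP.
  apply (Filter_prod _ _ _ (fun x => a < x < b /\ P (H x)) (fun y => y = b)).
  - apply filter_and; [apply at_right_lt, hab | apply Hl, HP].
  - reflexivity.
  - intros x y [Hx HPx] ->. exists (H x). split; [apply Hi, Hx | exact HPx].
Qed.

Section IncreasingInverse.

Variable f : R -> R.
Hypothesis f_incr : forall x y, x < y -> f x < f y.
Hypothesis f_surj : forall y, exists x, f x = y.

Definition increasing_inverse (y : R) : R := epsilon (inhabits 0) (fun x => f x = y).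

Lemma increasing_inverseK y : f (increasing_inverse y) = y.
Proof. unfold increasing_inverse. apply epsilon_spec, f_surj. Qed.

Lemma increasing_inverse_lt x y : x < y -> increasing_inverse x < increasing_inverse y.
Proof.
  intros Hxy. destruct (Rlt_or_le (increasing_inverse x) (increasing_inverse y)) as [H|H]; auto.
  assert (f (increasing_inverse y) <= f (increasing_inverse x)).
  { destruct H as [H|H]; [left; apply f_incr, H | right; rewrite H; reflexivity]. }
  rewrite !increasing_inverseK in H0. lra.
Qed.

Lemma increasing_inverse_le x y : x <= y -> increasing_inverse x <= increasing_inverse y.
Proof.
  intros [H|H]; [left; apply increasing_inverse_lt, H | right; rewrite H; reflexivity].
Qed.

Lemma increasing_inverse_of x : increasing_inverse (f x) = x.
Proof.
  destruct (Rtotal_order (increasing_inverse (f x)) x) as [H|[H|H]]; auto;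
    apply f_incr in H; rewrite increasing_inverseK in H; lra.
Qed.

Variable f' : R -> R.
Hypothesis f_derive : forall x, is_derive f x (f' x).

Lemma continuous_increasing_inverse y : continuous increasing_inverse y.
Proof.
  apply continuity_pt_filterlim.
  set (x := increasing_inverse y).
  assert (Hy : f (x - 1) < y < f (x + 1)).
  { rewrite <- (increasing_inverseK y). fold x. split; apply f_incr; lra. }
  apply (continuity_pt_recip_interv f increasing_inverse (x - 1) (x + 1)); [lra | | | | | exact Hy].
  - intros u v _ Huv _. apply f_incr, Huv.
  - intros; apply increasing_inverseK.
  - intros z H1 H2. rewrite <- (increasing_inverse_of (x - 1)), <- (increasing_inverse_of (x + 1)).
    split; apply increasing_inverse_le; lra.
  - intros z _. apply continuity_pt_filterlim, (ex_derive_continuous (V:=R_NormedModule)).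
    eexists. apply f_derive.
Qed.

Lemma is_derive_increasing_inverse y :
  f' (increasing_inverse y) <> 0 -> is_derive increasing_inverse y (/ f' (increasing_inverse y)).
Proof.
  intros Hl0. set (x := increasing_inverse y).
  assert (Hy : f (x - 1) < y < f (x + 1)).
  { rewrite <- (increasing_inverseK y). fold x. split; apply f_incr; lra. }
  assert (Hx : increasing_inverse (f (x - 1)) <= x <= increasing_inverse (f (x + 1))).
  { rewrite !increasing_inverse_of. lra. }
  assert (Prf : forall z, increasing_inverse (f (x - 1)) <= z <= increasing_inverse (f (x + 1)) ->
                  derivable_pt f z).
  { intros z _. exists (f' z). apply is_derive_Reals, f_derive. }
  assert (Hd : derive_pt f x (Prf x Hx) = f' x).
  { apply derive_pt_eq_0, is_derive_Reals, f_derive. }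
  apply is_derive_Reals.
  replace (/ f' x) with (1 / derive_pt f x (Prf x Hx)) by (rewrite Hd; field; auto).
  apply (derivable_pt_lim_recip_interv f increasing_inverse (f (x - 1)) (f (x + 1)) y Prf);
    [apply continuity_pt_filterlim, continuous_increasing_inverse | lra | lra | |].
  - intros; apply increasing_inverseK.
  - change (derive_pt f x (Prf x Hx) <> 0). rewrite Hd. exact Hl0.
Qed.

End IncreasingInverse.

(** * The cycloid *)

Lemma sin_sub_lt a b : a < b -> sin b - sin a < b - a.
Proof.
  intros Hab. set (h := (b - a) / 2).
  assert (E : sin b - sin a = 2 * cos ((b + a) / 2) * sin h).
  { replace (sin b - sin a) with (sin b + sin (- a)) by (rewrite sin_neg; ring).
    rewrite form3. unfold h. replace ((b - - a) / 2) with ((b + a) / 2) by field.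
    replace ((b + - a) / 2) with ((b - a) / 2) by field. reflexivity. }
  rewrite E. replace (b - a) with (2 * h) by (unfold h; field).
  assert (hp : 0 < h) by (unfold h; lra).
  pose proof (COS_bound ((b + a) / 2)). pose proof (SIN_bound h). pose proof (sin_lt_x h hp).
  destruct (Rle_or_lt 0 (sin h)) as [Hs|Hs]; [nra |].
  assert (1 < h).
  { destruct (Rle_or_lt h 1) as [Hh|Hh]; auto.
    assert (0 < sin h) by (apply sin_gt_0; pose proof PI2_3_2; lra). lra. }
  nra.
Qed.

Definition cycloid_x (k th : R) : R := k / 2 * (th - sin th).

Lemma cycloid_x_lt k x y : 0 < k -> x < y -> cycloid_x k x < cycloid_x k y.
Proof. intros hk hxy. unfold cycloid_x. pose proof (sin_sub_lt x y hxy). nra. Qed.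

Lemma is_derive_cycloid_x k th : is_derive (cycloid_x k) th (k / 2 * (1 - cos th)).
Proof. unfold cycloid_x. auto_derive; auto. ring. Qed.

Lemma cycloid_x_surj k y : 0 < k -> exists th, cycloid_x k th = y.
Proof.
  intros hk. set (A := 2 * Rabs y / k + 1).
  assert (HA : cycloid_x k (- A) <= y <= cycloid_x k A).
  { unfold cycloid_x, A. pose proof (SIN_bound (- (2 * Rabs y / k + 1))).
    pose proof (SIN_bound (2 * Rabs y / k + 1)). pose proof (Rle_abs y).
    pose proof (Rle_abs (- y)). rewrite Rabs_Ropp in *.
    assert (k / 2 * (2 * Rabs y / k) = Rabs y) by (field; lra). nra. }
  destruct (IVT_gen_consistent (cycloid_x k) (- A) A y) as [x [_ Hx]]; eauto.
  - intros x. apply (ex_derive_continuous (V:=R_NormedModule)).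
    eexists. apply is_derive_cycloid_x.
  - rewrite Rmin_left, Rmax_right; lra.
Qed.

Definition cycloid_angle (k : R) : R -> R := increasing_inverse (cycloid_x k).

Lemma one_sub_cos_half th : 1 - cos th = 2 * sin (th / 2) ^ 2.
Proof. replace th with (2 * (th / 2)) at 1 by field. rewrite cos_2a_sin. ring. Qed.

Section CycloidAngle.

Variable k : R.
Hypothesis hk : 0 < k.

Let incr := fun x y => cycloid_x_lt k x y hk.
Let surj := fun y => cycloid_x_surj k y hk.

Lemma cycloid_xK t : cycloid_x k (cycloid_angle k t) = t.
Proof. exact (increasing_inverseK _ surj t). Qed.

Lemma cycloid_angleK th : cycloid_angle k (cycloid_x k th) = th.
Proof. exact (increasing_inverse_of _ incr surj th). Qed.

Lemma cycloid_angle_lt x y : x < y -> cycloid_angle k x < cycloid_angle k y.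
Proof. exact (increasing_inverse_lt _ incr surj x y). Qed.

Lemma cycloid_angle_le x y : x <= y -> cycloid_angle k x <= cycloid_angle k y.
Proof. exact (increasing_inverse_le _ incr surj x y). Qed.

Lemma continuous_cycloid_angle t : continuous (cycloid_angle k) t.
Proof. exact (continuous_increasing_inverse _ incr surj _ (is_derive_cycloid_x k) t). Qed.

Lemma is_derive_cycloid_angle t : 0 < cycloid_angle k t < 2 * PI ->
  is_derive (cycloid_angle k) t (/ (k * sin (cycloid_angle k t / 2) ^ 2)).
Proof.
  intros Ht. assert (0 < sin (cycloid_angle k t / 2)) by (apply sin_gt_0; lra).
  replace (k * sin (cycloid_angle k t / 2) ^ 2) with (k / 2 * (1 - cos (cycloid_angle k t)))
    by (rewrite one_sub_cos_half; field).
  apply (is_derive_increasing_inverse _ incr surj _ (is_derive_cycloid_x k)).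
  change (k / 2 * (1 - cos (cycloid_angle k t)) <> 0). rewrite one_sub_cos_half.
  apply Rgt_not_eq. apply Rmult_lt_0_compat; [lra | ]. pose proof (pow_lt _ 2 H). lra.
Qed.

End CycloidAngle.

(** * The functional only sees [0, b] *)

Section Agree.

Variables b beta : R.
Variables f g : R -> R.
Hypothesis hb : 0 < b.
Hypothesis fg : forall t, 0 <= t <= b -> f t = g t.

Lemma locally_agree t : 0 < t < b -> locally t (fun x => f x = g x).
Proof.
  intros Ht. generalize (locally_between 0 b t Ht). apply filter_imp.
  intros x Hx. apply fg. lra.
Qed.

Lemma M_integrand_agree t : 0 < t < b -> M_integrand f t = M_integrand g t.
Proof.
  intros Ht. unfold M_integrand. rewrite fg by lra.
  now rewrite (Derive_ext_loc f g t (locally_agree t Ht)).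
Qed.

Lemma is_RInt_gen_M_agree l :
  is_RInt_gen (M_integrand f) (at_right 0) (at_point b) l ->
  is_RInt_gen (M_integrand g) (at_right 0) (at_point b) l.
Proof.
  apply is_RInt_gen_ext.
  apply (Filter_prod _ _ _ (fun x => 0 < x < b) (fun y => y = b));
    [apply at_right_lt, hb | reflexivity |].
  intros x y Hx -> t. cbn. rewrite Rmin_left, Rmax_right by lra. intros Ht.
  apply M_integrand_agree. lra.
Qed.

Lemma inY_agree : inY b beta f -> inY b beta g.
Proof.
  intros [Hc [[d [Hd [Hdb Hdc]]] [Hpos [H0 [Hbeta [l Hl]]]]]].
  split; [| split; [| split; [| split; [| split]]]].
  - intros t Ht. rewrite <- fg by exact Ht.
    apply (filterlim_within_ext _ f); [intros x Hx; apply fg, Hx | apply Hc, Ht].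
  - exists d. split; [| split; [| exact Hdc]].
    + intros t Ht. apply (is_derive_ext_loc f); [apply locally_agree, Ht | apply Hd, Ht].
    + apply (filterlim_ext_loc (fun h => (f (b + h) - f b) / h)); [| exact Hdb].
      generalize (at_left_gt (- b) 0 ltac:(lra)). apply filter_imp. intros h Hh.
      rewrite !fg by lra. reflexivity.
  - intros t Ht. rewrite <- fg by lra. apply Hpos, Ht.
  - rewrite <- fg by lra. exact H0.
  - rewrite <- fg by lra. exact Hbeta.
  - exists l. apply is_RInt_gen_M_agree, Hl.
Qed.

End Agree.

(** * The calibration *)

Lemma dot_le_sqrt a p s c : s ^ 2 + c ^ 2 = 1 -> s * a + c * p <= sqrt (a ^ 2 + p ^ 2).
Proof.
  intros H. apply Rle_trans with (Rabs (s * a + c * p)); [apply Rle_abs |].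
  rewrite <- sqrt_Rsqr_abs. apply sqrt_le_1_alt. unfold Rsqr.
  replace (a ^ 2 + p ^ 2) with ((s ^ 2 + c ^ 2) * (a ^ 2 + p ^ 2)) by (rewrite H; ring).
  pose proof (pow2_ge_0 (s * p - c * a)). nra.
Qed.

(* The left-hand side equals [s / u + c * p]. *)
Lemma calibration_ineq u p s c m : 0 < u -> 0 < s -> 0 < m -> s ^ 2 + c ^ 2 = 1 ->
  2 / m - u / (m ^ 2 * s) + c * p + (m * s - u) ^ 2 / (u * m * (m * s))
  <= sqrt (/ u ^ 2 + p ^ 2).
Proof.
  intros hu hs hm H.
  replace (/ u ^ 2) with ((/ u) ^ 2) by (field; lra).
  replace (2 / m - u / (m ^ 2 * s) + c * p + (m * s - u) ^ 2 / (u * m * (m * s)))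
    with (s * / u + c * p) by (field; repeat split; lra).
  apply dot_le_sqrt, H.
Qed.

Lemma calibration_eq s c m : 0 < s -> 0 < m -> s ^ 2 + c ^ 2 = 1 ->
  sqrt (/ (m * s) ^ 2 + (c / (m * s ^ 2)) ^ 2) = / (m * s ^ 2).
Proof.
  intros hs hm H. assert (0 < m * s ^ 2) by (apply Rmult_lt_0_compat; [lra | apply pow_lt; lra]).
  replace (/ (m * s) ^ 2 + (c / (m * s ^ 2)) ^ 2) with ((/ (m * s ^ 2)) ^ 2).
  - apply sqrt_pow2. left. apply Rinv_0_lt_compat. lra.
  - field_simplify; try (split; lra). rewrite H. reflexivity.
Qed.

Definition half_sin (k t : R) : R := sin (cycloid_angle k t / 2).
Definition half_cos (k t : R) : R := cos (cycloid_angle k t / 2).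

(* δ0 in the cycloid parameter: 2 γ0 = k (1 - cos θ) = 2 k sin (θ/2)^2. *)
Definition extremal (k t : R) : R := sqrt (2 * k) * half_sin k t.

Definition calibrator (k : R) (delta : R -> R) (t : R) : R :=
  2 * t / sqrt (2 * k) + half_cos k t * delta t.

Definition calibrator_slope (k : R) (delta : R -> R) (p t : R) : R :=
  2 / sqrt (2 * k) - delta t / (2 * k * half_sin k t) + half_cos k t * p.

Definition calibration_gap (k : R) (delta : R -> R) (t : R) : R :=
  (extremal k t - delta t) ^ 2 / (delta t * sqrt (2 * k) * extremal k t).

Lemma half_sin_cos k t : half_sin k t ^ 2 + half_cos k t ^ 2 = 1.
Proof.
  unfold half_sin, half_cos. pose proof (sin2_cos2 (cycloid_angle k t / 2)).
  unfold Rsqr in H. lra.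
Qed.

Section Extremal.

Variables k th_t b : R.
Hypothesis hk : 0 < k.
Hypothesis hth : 0 < th_t < 2 * PI.
Hypothesis hb : cycloid_x k th_t = b.
Variable beta : R.
Hypothesis hbeta : k = 2 * beta / (1 - cos th_t).

Lemma sqrt_2k_pos : 0 < sqrt (2 * k).
Proof. apply sqrt_lt_R0. lra. Qed.

Lemma sqrt_2k_sq : sqrt (2 * k) ^ 2 = 2 * k.
Proof. apply pow2_sqrt. lra. Qed.

Lemma cycloid_angle_0 : cycloid_angle k 0 = 0.
Proof.
  replace 0 with (cycloid_x k 0) at 1 by (unfold cycloid_x; rewrite sin_0; ring).
  apply cycloid_angleK, hk.
Qed.

Lemma cycloid_angle_b : cycloid_angle k b = th_t.
Proof. rewrite <- hb. apply cycloid_angleK, hk. Qed.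

Lemma b_pos : 0 < b.
Proof.
  rewrite <- hb. replace 0 with (cycloid_x k 0) by (unfold cycloid_x; rewrite sin_0; ring).
  apply cycloid_x_lt; lra.
Qed.

Lemma cycloid_angle_bounds t : 0 <= t <= b -> 0 <= cycloid_angle k t <= th_t.
Proof.
  intros Ht. rewrite <- cycloid_angle_0, <- cycloid_angle_b.
  split; apply cycloid_angle_le; lra.
Qed.

Lemma cycloid_angle_range t : 0 < t <= b -> 0 < cycloid_angle k t < 2 * PI.
Proof.
  intros Ht. pose proof (cycloid_angle_bounds t ltac:(lra)).
  rewrite <- cycloid_angle_0. split; [apply cycloid_angle_lt |]; lra.
Qed.

Lemma half_sin_pos t : 0 < t <= b -> 0 < half_sin k t.
Proof. intros Ht. pose proof (cycloid_angle_range t Ht). apply sin_gt_0; lra. Qed.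

Lemma continuous_half_sin t : continuous (half_sin k) t.
Proof.
  apply continuous_sin_comp, (continuous_Rmult _ (fun _ => / 2)).
  - apply continuous_cycloid_angle, hk.
  - apply continuous_const.
Qed.

Lemma continuous_half_cos t : continuous (half_cos k) t.
Proof.
  apply continuous_cos_comp, (continuous_Rmult _ (fun _ => / 2)).
  - apply continuous_cycloid_angle, hk.
  - apply continuous_const.
Qed.

Lemma is_derive_half_cos t : 0 < t <= b ->
  is_derive (half_cos k) t (- / (2 * k * half_sin k t)).
Proof.
  intros Ht. pose proof (half_sin_pos t Ht).
  pose proof (is_derive_cycloid_angle k hk t (cycloid_angle_range t Ht)) as D.
  unfold half_cos. auto_derive; [eexists; exact D |].
  change (Derive (fun x => cycloid_angle k x) t) with (Derive (cycloid_angle k) t).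
  rewrite (is_derive_unique _ _ _ D).
  replace (cycloid_angle k t * / 2) with (cycloid_angle k t / 2) by field.
  fold (half_sin k t). field. lra.
Qed.

Lemma continuous_inv_half_sin_sq c t : 0 < c -> 0 < t <= b ->
  continuous (fun x => / (c * half_sin k x ^ 2)) t.
Proof.
  intros Hc Ht. pose proof (half_sin_pos t Ht).
  apply continuous_Rinv_comp; [| apply Rgt_not_eq, Rmult_lt_0_compat; [lra | apply pow_lt; lra]].
  apply (continuous_Rmult (fun _ => c)); [apply continuous_const |].
  apply (continuous_Rmult _ (fun x => half_sin k x * 1)); [apply continuous_half_sin |].
  apply (continuous_Rmult _ (fun _ => 1)); [apply continuous_half_sin | apply continuous_const].
Qed.

Lemma continuous_extremal t : continuous (extremal k) t.
Proof.
  apply (continuous_Rmult (fun _ => sqrt (2 * k)));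
    [apply continuous_const | apply continuous_half_sin].
Qed.

Lemma extremal_0 : extremal k 0 = 0.
Proof.
  unfold extremal, half_sin. rewrite cycloid_angle_0.
  replace (0 / 2) with 0 by field. rewrite sin_0. ring.
Qed.

Lemma is_derive_extremal t : 0 < t <= b ->
  is_derive (extremal k) t (half_cos k t / (sqrt (2 * k) * half_sin k t ^ 2)).
Proof.
  intros Ht. pose proof (half_sin_pos t Ht). pose proof sqrt_2k_pos. pose proof sqrt_2k_sq.
  pose proof (is_derive_cycloid_angle k hk t (cycloid_angle_range t Ht)) as D.
  unfold extremal, half_sin. auto_derive; [eexists; exact D |].
  change (Derive (fun x => cycloid_angle k x) t) with (Derive (cycloid_angle k) t).
  rewrite (is_derive_unique _ _ _ D).
  replace (cycloid_angle k t * / 2) with (cycloid_angle k t / 2) by field.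
  fold (half_sin k t) (half_cos k t).
  assert (Ek : k = sqrt (2 * k) ^ 2 / 2) by lra.
  set (m := sqrt (2 * k)) in *. set (s := half_sin k t) in *. set (c := half_cos k t).
  clearbody m s c. rewrite Ek. field. lra.
Qed.

Lemma M_integrand_extremal t : 0 < t <= b ->
  M_integrand (extremal k) t = sqrt (2 * k) / 2 * / (k * half_sin k t ^ 2).
Proof.
  intros Ht. pose proof (half_sin_pos t Ht). pose proof sqrt_2k_pos. pose proof sqrt_2k_sq.
  unfold M_integrand. rewrite (is_derive_unique _ _ _ (is_derive_extremal t Ht)).
  unfold extremal at 1. rewrite calibration_eq by (auto; apply half_sin_cos).
  assert (Ek : k = sqrt (2 * k) ^ 2 / 2) by lra.
  set (m := sqrt (2 * k)) in *. set (s := half_sin k t) in *. clearbody m s.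
  rewrite Ek. field. lra.
Qed.

Lemma is_RInt_M_extremal x : 0 < x < b ->
  is_RInt (M_integrand (extremal k)) x b (sqrt (2 * k) / 2 * (th_t - cycloid_angle k x)).
Proof.
  intros Hx. rewrite <- cycloid_angle_b.
  apply (is_RInt_ext (fun t => sqrt (2 * k) / 2 * / (k * half_sin k t ^ 2))).
  - rewrite Rmin_left, Rmax_right by lra. intros t Ht.
    symmetry. apply M_integrand_extremal. lra.
  - replace (sqrt (2 * k) / 2 * (cycloid_angle k b - cycloid_angle k x)) with
      (sqrt (2 * k) / 2 * cycloid_angle k b - sqrt (2 * k) / 2 * cycloid_angle k x) by ring.
    apply (is_RInt_derive (fun t => sqrt (2 * k) / 2 * cycloid_angle k t));
      rewrite Rmin_left, Rmax_right by lra; intros t Ht.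
    + apply is_derive_scal, is_derive_cycloid_angle; [exact hk |].
      apply cycloid_angle_range; lra.
    + apply (continuous_Rmult (fun _ => sqrt (2 * k) / 2)); [apply continuous_const |].
      apply continuous_inv_half_sin_sq; lra.
Qed.

Lemma is_RInt_gen_M_extremal :
  is_RInt_gen (M_integrand (extremal k)) (at_right 0) (at_point b) (sqrt (2 * k) / 2 * th_t).
Proof.
  apply (is_RInt_gen_at_right_of_lim _ (fun x => sqrt (2 * k) / 2 * (th_t - cycloid_angle k x)));
    [exact b_pos | exact is_RInt_M_extremal |].
  replace (sqrt (2 * k) / 2 * th_t) with (sqrt (2 * k) / 2 * (th_t - cycloid_angle k 0))
    by (rewrite cycloid_angle_0; ring).
  eapply filterlim_filter_le_1; [apply filter_le_within |].
  apply (continuous_Rmult (fun _ => sqrt (2 * k) / 2) (fun x => th_t - cycloid_angle k x));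
    [apply continuous_const |].
  apply (continuous_Rplus (fun _ => th_t) (fun x => - cycloid_angle k x));
    [apply continuous_const |].
  apply (continuous_opp (V:=R_NormedModule)), continuous_cycloid_angle, hk.
Qed.

Lemma extremal_b : extremal k b = sqrt (2 * beta).
Proof.
  unfold extremal, half_sin. rewrite cycloid_angle_b.
  assert (0 < sin (th_t / 2)) by (apply sin_gt_0; lra).
  assert (Hc : 1 - cos th_t = 2 * sin (th_t / 2) ^ 2) by apply one_sub_cos_half.
  rewrite <- (sqrt_pow2 (sin (th_t / 2))) by lra. rewrite <- sqrt_mult by (lra || apply pow2_ge_0).
  f_equal. rewrite hbeta, Hc. field. lra.
Qed.

Lemma extremal_inY : inY b beta (extremal k).
Proof.
  pose proof b_pos. pose proof sqrt_2k_pos.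
  set (d := fun t => half_cos k t / (sqrt (2 * k) * half_sin k t ^ 2)).
  assert (Hd : forall t, 0 < t <= b -> continuous d t).
  { intros t Ht. apply (continuous_Rmult (half_cos k)); [apply continuous_half_cos |].
    apply continuous_inv_half_sin_sq; lra. }
  split; [| split; [| split; [| split; [| split]]]].
  - intros t Ht. eapply filterlim_filter_le_1; [apply filter_le_within | apply continuous_extremal].
  - exists d. split; [| split].
    + intros t Ht. apply is_derive_extremal. lra.
    + apply is_derive_at_left_quotient, is_derive_extremal. lra.
    + intros t Ht. eapply filterlim_filter_le_1; [apply filter_le_within | apply Hd, Ht].
  - intros t Ht. apply Rmult_lt_0_compat; [lra | apply half_sin_pos, Ht].
  - exact extremal_0.
  - exact extremal_b.
  - eexists. exact is_RInt_gen_M_extremal.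
Qed.

Lemma is_derive_calibrator (delta : R -> R) t p : 0 < t <= b -> is_derive delta t p ->
  is_derive (calibrator k delta) t (calibrator_slope k delta p t).
Proof.
  intros Ht Hp. pose proof sqrt_2k_pos.
  unfold calibrator, calibrator_slope.
  replace (2 / sqrt (2 * k) - delta t / (2 * k * half_sin k t) + half_cos k t * p)
    with (2 / sqrt (2 * k) + (- / (2 * k * half_sin k t) * delta t + half_cos k t * p))
    by (field; pose proof (half_sin_pos t Ht); lra).
  apply (is_derive_plus (fun x => 2 * x / sqrt (2 * k)) (fun x => half_cos k x * delta x)).
  - auto_derive; [lra | field; lra].
  - 
    apply (is_derive_mult (half_cos k) delta); [apply is_derive_half_cos, Ht | exact Hp |].
    intros; apply Rmult_comm.
Qed.

Lemma continuous_calibrator_slope (delta d : R -> R) t : 0 < t <= b ->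
  continuous delta t -> continuous d t ->
  continuous (fun x => calibrator_slope k delta (d x) x) t.
Proof.
  intros Ht Hdelta Hd. pose proof (half_sin_pos t Ht).
  unfold calibrator_slope.
  apply (continuous_Rplus (fun x => 2 / sqrt (2 * k) - delta x / (2 * k * half_sin k x))).
  - apply (continuous_Rplus (fun _ => 2 / sqrt (2 * k))); [apply continuous_const |].
    apply (continuous_opp (V:=R_NormedModule) (fun x => delta x / (2 * k * half_sin k x))).
    apply (continuous_Rmult delta); [exact Hdelta |].
    apply continuous_Rinv_comp; [| apply Rgt_not_eq, Rmult_lt_0_compat; lra].
    apply (continuous_Rmult (fun _ => 2 * k)); [apply continuous_const | apply continuous_half_sin].
  - apply continuous_Rmult; [apply continuous_half_cos | exact Hd].
Qed.

Lemma calibrator_slope_gap_le (delta : R -> R) p t : 0 < t <= b -> 0 < delta t ->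
  calibrator_slope k delta p t + calibration_gap k delta t <= sqrt (/ delta t ^ 2 + p ^ 2).
Proof.
  intros Ht Hdelta. pose proof (half_sin_pos t Ht). pose proof sqrt_2k_pos. pose proof sqrt_2k_sq.
  assert (Hcal := calibration_ineq (delta t) p (half_sin k t) (half_cos k t) (sqrt (2 * k))
                   Hdelta H H0 (half_sin_cos k t)).
  unfold calibrator_slope, calibration_gap, extremal. rewrite H1 in Hcal. lra.
Qed.

Lemma calibration_gap_nonneg (delta : R -> R) t : 0 < t <= b -> 0 < delta t ->
  0 <= calibration_gap k delta t.
Proof.
  intros Ht Hdelta. pose proof (half_sin_pos t Ht). pose proof sqrt_2k_pos.
  unfold calibration_gap, extremal.
  apply Rdiv_le_0_compat; [apply pow2_ge_0 |].
  repeat apply Rmult_lt_0_compat; lra.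
Qed.

Lemma calibration_gap_pos (delta : R -> R) t : 0 < t <= b -> 0 < delta t ->
  delta t <> extremal k t -> 0 < calibration_gap k delta t.
Proof.
  intros Ht Hdelta Hne. pose proof (half_sin_pos t Ht). pose proof sqrt_2k_pos.
  unfold calibration_gap.
  apply Rdiv_lt_0_compat; [apply pow2_gt_0; lra |].
  unfold extremal. repeat apply Rmult_lt_0_compat; lra.
Qed.

Lemma continuous_calibration_gap (delta : R -> R) t : 0 < t <= b -> 0 < delta t ->
  continuous delta t -> continuous (calibration_gap k delta) t.
Proof.
  intros Ht Hdelta Hc. pose proof (half_sin_pos t Ht). pose proof sqrt_2k_pos.
  assert (Hd : continuous (fun x => extremal k x - delta x) t).
  { apply (continuous_Rplus (extremal k)); [apply continuous_extremal |].
    apply (continuous_opp (V:=R_NormedModule)), Hc. }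
  unfold calibration_gap.
  apply (continuous_Rmult (fun x => (extremal k x - delta x) ^ 2)).
  - apply (continuous_Rmult _ (fun x => (extremal k x - delta x) * 1)); [exact Hd |].
    apply (continuous_Rmult _ (fun _ => 1)); [exact Hd | apply continuous_const].
  - apply continuous_Rinv_comp.
    + apply (continuous_Rmult (fun x => delta x * sqrt (2 * k))); [| apply continuous_extremal].
      apply (continuous_Rmult delta (fun _ => sqrt (2 * k))); [exact Hc | apply continuous_const].
    + unfold extremal. apply Rgt_not_eq. repeat apply Rmult_lt_0_compat; lra.
Qed.

Lemma filterlim_calibrator (F : (R -> Prop) -> Prop) {FF : Filter F} (delta : R -> R) t l :
  filter_le F (locally t) -> filterlim delta F (locally l) ->
  filterlim (calibrator k delta) F (locally (2 * t / sqrt (2 * k) + half_cos k t * l)).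
Proof.
  intros HF Hl. unfold calibrator.
  apply (filterlim_Rplus F (fun x => 2 * x / sqrt (2 * k))).
  - eapply filterlim_filter_le_1; [exact HF |].
    apply (continuous_Rmult (fun x => 2 * x)); [| apply continuous_const].
    apply (continuous_Rmult (fun _ => 2)); [apply continuous_const | apply continuous_id].
  - apply (filterlim_Rmult F (half_cos k) delta); [| exact Hl].
    eapply filterlim_filter_le_1; [exact HF | apply continuous_half_cos].
Qed.

Lemma calibrator_b (delta : R -> R) : delta b = extremal k b ->
  calibrator k delta b = sqrt (2 * k) / 2 * th_t.
Proof.
  intros Hb. pose proof sqrt_2k_pos. pose proof sqrt_2k_sq.
  unfold calibrator, extremal, half_cos, half_sin. rewrite Hb. unfold extremal, half_sin.
  rewrite cycloid_angle_b, <- hb. unfold cycloid_x.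
  replace th_t with (2 * (th_t / 2)) at 2 by field. rewrite sin_2a.
  replace (2 * (th_t / 2)) with th_t by field.
  assert (Ek : k = sqrt (2 * k) ^ 2 / 2) by lra.
  set (m := sqrt (2 * k)) in *. clearbody m. rewrite Ek. field. lra.
Qed.

Lemma calibrator_at_right_0 (delta : R -> R) : cont_on_0b b delta -> delta 0 = 0 ->
  filterlim (calibrator k delta) (at_right 0) (locally 0).
Proof.
  intros Hc H0. pose proof b_pos. pose proof sqrt_2k_pos.
  replace (locally 0) with (locally (2 * 0 / sqrt (2 * k) + half_cos k 0 * 0))
    by (f_equal; field; lra).
  apply (filterlim_calibrator (at_right 0)); [apply filter_le_within |].
  pose proof (Hc 0 ltac:(lra)) as Hc0. rewrite H0 in Hc0.
  apply (filterlim_filter_le_1 _ (filter_le_at_right_within 0 b H)), Hc0.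
Qed.

Lemma calibrator_at_left_b (delta : R -> R) : cont_on_0b b delta ->
  filterlim (calibrator k delta) (at_left b) (locally (calibrator k delta b)).
Proof.
  intros Hc. pose proof b_pos.
  apply (filterlim_calibrator (at_left b)); [apply filter_le_within |].
  apply (filterlim_filter_le_1 _ (filter_le_at_left_within 0 b H)), Hc. lra.
Qed.

Lemma calibration_lower_bound (delta : R -> R) a1 a2 c :
  inY b beta delta -> 0 < a1 -> a1 <= a2 -> a2 < b ->
  (forall t, a1 < t < a2 -> c <= calibration_gap k delta t) ->
  sqrt (2 * k) / 2 * th_t + c * (a2 - a1) <= M b delta.
Proof.
  intros [Hc [[d [Hd [_ Hdc]]] [Hpos [H0 [Hb HM]]]]] H1 H2 H3 Hgap.
  assert (Hslope : forall t, 0 < t < b ->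
    calibrator_slope k delta (d t) t + calibration_gap k delta t <= M_integrand delta t).
  { intros t Ht. unfold M_integrand. rewrite (is_derive_unique _ _ _ (Hd t Ht)).
    apply calibrator_slope_gap_le; [lra | apply Hpos; lra]. }
  replace (sqrt (2 * k) / 2 * th_t) with (calibrator k delta b - 0)
    by (rewrite calibrator_b; [ring | rewrite Hb, extremal_b; reflexivity]).
  apply (is_RInt_gen_ge_antiderivative (M_integrand delta)
           (fun t => calibrator_slope k delta (d t) t) (calibrator k delta) 0 a1 a2 b c); auto.
  - intros t _. apply sqrt_pos.
  - intros t Ht. split; [| split].
    + apply is_derive_calibrator; [lra | apply Hd, Ht].
    + apply continuous_calibrator_slope; [lra | |].
      * apply (ex_derive_continuous (V:=R_NormedModule)). eexists. apply Hd, Ht.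
      * apply (continuous_of_within (fun x => 0 < x <= b)); [| apply Hdc; lra].
        generalize (locally_between 0 b t Ht). apply filter_imp. intros; lra.
    + pose proof (Hslope t Ht).
      pose proof (calibration_gap_nonneg delta t ltac:(lra) (Hpos t ltac:(lra))). lra.
  - intros t Ht. pose proof (Hslope t ltac:(lra)). pose proof (Hgap t Ht). lra.
  - apply (RInt_gen_correct (V:=R_CompleteNormedModule)), HM.
  - apply calibrator_at_right_0; auto.
  - apply calibrator_at_left_b, Hc.
Qed.

Lemma extremal_le_M (delta : R -> R) :
  inY b beta delta -> sqrt (2 * k) / 2 * th_t <= M b delta.
Proof.
  intros HY. pose proof b_pos.
  enough (sqrt (2 * k) / 2 * th_t + 0 * (b / 2 - b / 2) <= M b delta) by lra.
  apply calibration_lower_bound; [exact HY | lra | lra | lra | intros t Ht; lra].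
Qed.

Lemma calibration_strict (delta : R -> R) t :
  inY b beta delta -> 0 < t < b -> delta t <> extremal k t ->
  sqrt (2 * k) / 2 * th_t < M b delta.
Proof.
  intros HY Ht Hne. pose proof HY as [_ [[d [Hd _]] [Hpos _]]].
  assert (Hc : continuous delta t).
  { apply (ex_derive_continuous (V:=R_NormedModule)). eexists. apply Hd, Ht. }
  set (g := calibration_gap k delta t).
  assert (Hg : 0 < g) by (apply calibration_gap_pos; [lra | apply Hpos; lra | exact Hne]).
  assert (Hnear : locally t (fun x => g / 2 < calibration_gap k delta x /\ 0 < x < b)).
  { apply filter_and; [| apply locally_between, Ht].
    apply (continuous_calibration_gap delta t ltac:(lra) (Hpos t ltac:(lra)) Hc).
    exists (mkposreal (g / 2) ltac:(lra)). intros y Hy.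
    apply ball_R in Hy. cbn [pos] in Hy. unfold g in *. lra. }
  destruct Hnear as [eps Heps]. pose proof (cond_pos eps).
  assert (Hin : forall x, Rabs (x - t) < eps -> g / 2 < calibration_gap k delta x /\ 0 < x < b)
    by (intros x Hx; apply Heps, Hx).
  pose proof (Hin (t - eps / 2) ltac:(rewrite Rabs_left; lra)) as [_ Hlo].
  pose proof (Hin (t + eps / 2) ltac:(rewrite Rabs_pos_eq; lra)) as [_ Hhi].
  assert (Hlb := calibration_lower_bound delta (t - eps / 2) (t + eps / 2) (g / 2) HY).
  assert (sqrt (2 * k) / 2 * th_t + g / 2 * (t + eps / 2 - (t - eps / 2)) <= M b delta).
  { apply Hlb; try lra. intros x Hx. apply Rlt_le, Hin, Rabs_def1; lra. }
  nra.
Qed.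

Lemma extremal_unique (delta : R -> R) :
  inY b beta delta -> M b delta <= sqrt (2 * k) / 2 * th_t ->
  forall t, 0 <= t <= b -> delta t = extremal k t.
Proof.
  intros HY HM t Ht. pose proof HY as [_ [_ [_ [H0 [Hb _]]]]].
  destruct (Req_dec t 0) as [-> | Ht0]; [now rewrite H0, extremal_0 |].
  destruct (Req_dec t b) as [-> | Htb]; [now rewrite Hb, extremal_b |].
  destruct (Req_dec (delta t) (extremal k t)) as [E | Hne]; [exact E |].
  pose proof (calibration_strict delta t HY ltac:(lra) Hne). lra.
Qed.

Lemma extremal_graph (gamma0 : R -> R) :
  (forall th, 0 <= th <= th_t -> gamma0 (k / 2 * (th - sin th)) = k / 2 * (1 - cos th)) ->
  forall t, 0 <= t <= b -> extremal k t = sqrt (2 * gamma0 t).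
Proof.
  intros Hg t Ht. pose proof (cycloid_angle_bounds t Ht). pose proof sqrt_2k_pos.
  rewrite <- (cycloid_xK k hk t) at 2. unfold cycloid_x. rewrite Hg by exact H.
  rewrite one_sub_cos_half. unfold extremal, half_sin.
  assert (0 <= sin (cycloid_angle k t / 2)) by (apply sin_ge_0; lra).
  rewrite <- (sqrt_pow2 (sin (cycloid_angle k t / 2))) at 1 by exact H1.
  rewrite <- sqrt_mult by (lra || apply pow2_ge_0). f_equal. field.
Qed.

End Extremal.

Lemma cycloid_endpoint b beta th_t k :
  0 < b -> 0 < beta -> 0 < th_t < 2 * PI -> alpha th_t = beta / b ->
  k = 2 * beta / (1 - cos th_t) -> 0 < k /\ cycloid_x k th_t = b.
Proof.
  intros hb hbeta hth Ha Hk.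
  assert (0 < sin (th_t / 2)) by (apply sin_gt_0; lra).
  assert (Hc : 0 < 1 - cos th_t) by (rewrite one_sub_cos_half; nra).
  assert (Hx : 0 < th_t - sin th_t) by (pose proof (sin_lt_x th_t ltac:(lra)); lra).
  unfold alpha in Ha. split; [rewrite Hk; apply Rdiv_lt_0_compat; lra |].
  assert (E : b * (1 - cos th_t) = beta * (th_t - sin th_t)).
  { field_simplify_eq in Ha; lra. }
  unfold cycloid_x. rewrite Hk. field_simplify_eq; lra.
Qed.

Theorem proposition4 (b beta th_t k : R) (gamma0 : R -> R) :
  0 < b -> 0 < beta ->
  0 < th_t < 2 * PI -> alpha th_t = beta / b ->
  k = 2 * beta / (1 - cos th_t) ->
  (forall th, 0 <= th <= th_t ->
     gamma0 (k / 2 * (th - sin th)) = k / 2 * (1 - cos th)) ->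
  let delta0 := fun t => sqrt (2 * gamma0 t) in
  inY b beta delta0 /\
  (forall delta, inY b beta delta -> M b delta0 <= M b delta) /\
  (forall delta, inY b beta delta -> M b delta = M b delta0 ->
     forall t, 0 <= t <= b -> delta t = delta0 t).
Proof.
  intros hb hbeta hth Ha Hk Hg delta0.
  destruct (cycloid_endpoint b beta th_t k hb hbeta hth Ha Hk) as [hk hX].
  pose proof (extremal_graph k th_t b hk hth hX gamma0 Hg) as Hagree.
  assert (HM0 : M b delta0 = sqrt (2 * k) / 2 * th_t).
  { unfold M. apply (is_RInt_gen_unique (V:=R_CompleteNormedModule)).
    apply (is_RInt_gen_M_agree b (extremal k)); [exact hb | exact Hagree |].
    apply is_RInt_gen_M_extremal; auto. }
  split; [| split].
  - apply (inY_agree b beta (extremal k)); [exact hb | exact Hagree |].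
    apply (extremal_inY k th_t b); auto.
  - intros delta HY. rewrite HM0.
    apply (extremal_le_M k th_t b hk hth hX beta Hk delta HY).
  - intros delta HY HM t Ht. unfold delta0. rewrite <- Hagree by exact Ht.
    apply (extremal_unique k th_t b hk hth hX beta Hk delta HY); [lra | exact Ht].
Qed.
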